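(* Let $n\in\mathbb{N}$, let $\alpha_1,\dots,\alpha_n\ge0$, and let $U,V_1,\dots,V_n$ be independent nonnegative random variables with densities $f_U,f_{V_1},\dots,f_{V_n}$. Set $Z_i=\alpha_iU+V_i$ and let $X_1,\dots,X_n$ be random variables which, conditionally on $(U,V_1,\dots,V_n)$, are independent with $X_i$ Poisson distributed with mean $Z_i$. Then for all $x_1,\dots,x_n\in\mathbb{N}_0$, $$P(X_1=x_1,\dots,X_n=x_n)=\frac{1}{x_1!\cdots x_n!}\sum_{j_1=0}^{x_1}\cdots\sum_{j_n=0}^{x_n}\binom{x_1}{j_1}\cdots\binom{x_n}{j_n}\alpha_1^{j_1}\cdots\alpha_n^{j_n}\,\mathbb{E}\big(U^{j_1+\dots+j_n}e^{-(\alpha_1+\dots+\alpha_n)U}\big)\prod_{k=1}^n\mathbb{E}\big(V_k^{x_k-j_k}e^{-V_k}\big).$$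
   Context: This is the Poisson mixture model of random-additive-effect type. Conventions: $0^0=1$. *)

From HB Require Import structures.
From mathcomp Require Import all_boot all_order all_algebra.
From mathcomp Require Import all_classical all_reals all_analysis.
Set Implicit Arguments. Unset Strict Implicit. Unset Printing Implicit Defensive.
Import Order.TTheory GRing.Theory Num.Theory.
Local Open Scope classical_set_scope.
Local Open Scope ring_scope.

(* Poisson probability mass function with mean z >= 0, convention 0^0 = 1:
   pois z k = z^k / k! * e^{-z}.  (The library's poisson_pmf is 1 at rate 0
   for every k, which is not the Poisson(0) pmf, so we do not use it.) *)
Definition pois {R : realType} (z : R) (k : nat) : R :=
  z ^+ k / (k`!)%:R * expR (- z).

Definition UV {T : Type} {R : realType} (n : nat) (U : T -> R)
  (V : 'I_n -> T -> R) (i : 'I_n.+1) : T -> R :=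
  if unlift ord0 i is Some k then V k else U.

Definition mutually_independent {d} {T : measurableType d} {R : realType}
  (P : probability T R) (m : nat) (W : 'I_m -> T -> R) : Prop :=
  forall B : 'I_m -> set R, (forall i, measurable (B i)) ->
    P (\bigcap_(i in [set: 'I_m]) (W i @^-1` B i)) = (\prod_(i < m) P (W i @^-1` B i))%E.

Definition has_density {d} {T : measurableType d} {R : realType}
  (P : probability T R) (Y : T -> R) (f : R -> R) : Prop :=
  measurable_fun setT f /\ (forall x, 0 <= f x) /\
  forall B : set R, measurable B ->
    P (Y @^-1` B) = (\int[@lebesgue_measure R]_(x in B) (f x)%:E)%E.

Definition generated_events {T : Type} {R : realType} (m : nat)
  (W : 'I_m -> T -> R) : set (set T) :=
  <<s [set A | exists i, exists2 B : set R, measurable B & A = W i @^-1` B] >>.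

(* Conditionally on the sigma-algebra G, the X i are independent with X i
   Poisson distributed of mean Z i:  for every event A in G and every x,
   P(A /\ X = x) = E[ 1_A * prod_i pois (Z i) (x i) ]. *)
Definition cond_indep_poisson {d} {T : measurableType d} {R : realType}
  (P : probability T R) (G : set (set T)) (n : nat)
  (Z : 'I_n -> T -> R) (X : 'I_n -> T -> nat) : Prop :=
  forall (A : set T) (x : 'I_n -> nat), G A ->
    P (A `&` [set t | forall i, X i t = x i]) =
    (\int[P]_(t in A) (\prod_(i < n) pois (Z i t) (x i))%:E)%E.

From HB Require Import structures.
From mathcomp Require Import all_boot all_order all_algebra.
From mathcomp Require Import all_classical all_reals all_analysis.
From mathcomp Require Import measurable_realfun ring lra.
Import Order.TTheory GRing.Theory Num.Theory HBNNSimple.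
Local Open Scope classical_set_scope.
Local Open Scope ring_scope.

(* Expanding each [(alpha_i u + v_i) ^ x_i] by the binomial theorem turns the
   product of the Poisson weights into a finite sum of terms
   [c_j u ^ |j| e ^ (- (sum_i alpha_i) u) prod_k v_k ^ (x_k - j_k) e ^ (- v_k)].
   Conditioning on the whole space gives P(X = x) = E[prod_i pois(Z_i, x_i)],
   and by linearity and the independence of U, V_1, ..., V_n the expectation of
   each term factorises.  Independence is only assumed for events; it is
   extended to products of nonnegative functions of the variables one factor at
   a time, by approximating that factor with simple functions and passing to the
   limit by monotone convergence. *)

Section weighted_integral_comp.
Context d (T : measurableType d) (R : realType) (mu : {measure set T -> \bar R}).
Variable W : T -> R.
Hypothesis mW : measurable_fun setT W.

Lemma integral_indic_comp (B : set R) : measurable B ->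
  (\int[mu]_t (\1_B (W t))%:E = mu (W @^-1` B))%E.
Proof.
move=> mB; have mWB : measurable (W @^-1` B) by rewrite -[_ @^-1` _]setTI; exact: mW.
by rewrite -(setIT (W @^-1` B)) -integral_indic.
Qed.

Lemma ge0_integral_mul_nnsfun_comp (G : T -> R) (s : {nnsfun R >-> R}) :
  measurable_fun setT G -> (forall t, 0 <= G t) ->
  (\int[mu]_t (G t * s (W t))%:E =
   \sum_(r \in range s) r%:E * \int[mu]_t (G t * \1_(s @^-1` [set r]) (W t))%:E)%E.
Proof.
move=> mG G0.
have mI r : measurable_fun setT (fun t => \1_(s @^-1` [set r]) (W t) : R).
  exact: measurableT_comp.
under eq_integral => t _ do rewrite fimfunE mulr_fsumr -fsumEFin //.
rewrite ge0_integral_fsum //.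
- apply: eq_fsbigr => r /[!inE] -[y _ <-].
  under eq_integral do rewrite mulrCA EFinM.
  rewrite ge0_integralZl //; last by rewrite lee_fin.
  + by apply/measurable_EFinP; exact: measurable_funM.
  + by move=> t _; rewrite lee_fin mulr_ge0.
- by move=> r; apply/measurable_EFinP; do 2 apply: measurable_funM => //.
- move=> r t _; rewrite lee_fin mulr_ge0 // indicE.
  by case: (boolP (_ \in _)) => [/[!inE] /= <-|]; rewrite ?mulr1 ?mulr0.
Qed.

Variables (G : T -> R) (c : \bar R).
Hypotheses (mG : measurable_fun setT G) (G0 : forall t, 0 <= G t).
Hypotheses (c_fin : c \is a fin_num) (c_ge0 : (0 <= c)%E).
Hypothesis weighted_indic : forall B, measurable B ->
  (\int[mu]_t (G t * \1_B (W t))%:E = c * \int[mu]_t (\1_B (W t))%:E)%E.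

Lemma weighted_integral_comp_nnsfun (s : {nnsfun R >-> R}) :
  (\int[mu]_t (G t * s (W t))%:E = c * \int[mu]_t (s (W t))%:E)%E.
Proof.
rewrite ge0_integral_mul_nnsfun_comp //.
under [X in (_ = _ * X)%E]eq_integral do rewrite -[s _]mul1r.
rewrite (@ge0_integral_mul_nnsfun_comp (fun=> 1)) //.
have fin_s : finite_set (range s) by exact: fimfunP.
rewrite !fsbig_finite //= big_seq [in RHS]big_seq ge0_sume_distrr; last first.
  move=> r; rewrite in_fset_set // inE => -[y _ <-].
  by rewrite mule_ge0 ?lee_fin // integral_ge0 // => t _; rewrite lee_fin mul1r.
apply: eq_bigr => r _; rewrite weighted_indic; last first.
  by rewrite -[_ @^-1` _]setTI; exact: measurable_funP.
by under [in RHS]eq_integral do rewrite mul1r; rewrite muleCA.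
Qed.

Lemma weighted_integral_comp (h : R -> R) :
  measurable_fun setT h -> (forall y, 0 <= h y) ->
  (\int[mu]_t (G t * h (W t))%:E = c * \int[mu]_t (h (W t))%:E)%E.
Proof.
move=> mh h0; have mEh : measurable_fun setT (EFin \o h) by exact/measurable_EFinP.
pose s := nnsfun_approx measurableT mEh.
have s_nd t m k : (m <= k)%N -> s m (W t) <= s k (W t).
  by move=> mk; exact/lefP/nd_nnsfun_approx.
have s_cvg t : (fun n => (s n (W t))%:E) @ \oo --> (h (W t))%:E.
  by apply: cvg_nnsfun_approx => // y _; rewrite lee_fin.
have msW n : measurable_fun setT (fun t => s n (W t)) by exact: measurableT_comp.
have Gs_cvg t : (fun n => (G t * s n (W t))%:E) @ \oo --> (G t * h (W t))%:E.
  by rewrite EFinM; under eq_fun do rewrite EFinM; exact: cvgeZl.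
transitivity (limn (fun n => \int[mu]_t (G t * s n (W t))%:E))%E.
  rewrite -monotone_convergence //.
  - by apply: eq_integral => t _; apply/esym/cvg_lim.
  - by move=> n; apply/measurable_EFinP; exact: measurable_funM.
  - by move=> n t _; rewrite lee_fin mulr_ge0.
  - by move=> t _ m k mk; rewrite lee_fin ler_wpM2l // s_nd.
transitivity (c * limn (fun n => \int[mu]_t (s n (W t))%:E))%E; last first.
  rewrite -monotone_convergence //.
  - by congr (_ * _)%E; apply: eq_integral => t _; apply/cvg_lim.
  - by move=> n; apply/measurable_EFinP.
  - by move=> n t _; rewrite lee_fin.
  - by move=> t _ m k mk; rewrite lee_fin s_nd.
under eq_fun do rewrite weighted_integral_comp_nnsfun.
apply: limeMl => //; apply: ereal_nondecreasing_is_cvgn => m k mk.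
apply: ge0_le_integral => //.
- by move=> t _; rewrite lee_fin.
- by apply/measurable_EFinP.
- by apply/measurable_EFinP.
- by move=> t _; rewrite lee_fin s_nd.
Qed.

End weighted_integral_comp.

Lemma ge0_integralZl_sum d (T : measurableType d) (R : realType)
    (mu : {measure set T -> \bar R}) (I : finType) (Q : pred I) (F : I -> T -> R) (c : R) :
  0 <= c -> (forall i, measurable_fun setT (F i)) -> (forall i t, 0 <= F i t) ->
  (\int[mu]_t (c * \sum_(i | Q i) F i t)%:E = c%:E * \sum_(i | Q i) \int[mu]_t (F i t)%:E)%E.
Proof.
move=> c0 mF F0; under eq_integral do rewrite EFinM.
rewrite ge0_integralZl //; last 2 first.
- apply/measurable_EFinP; under eq_fun do rewrite -big_filter.
  exact: measurable_sum.
- by move=> t _; rewrite lee_fin sumr_ge0.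
under eq_integral do rewrite -sumEFin -big_filter.
rewrite ge0_integral_sum ?big_filter // => i.
- exact/measurable_EFinP.
- by move=> t _; rewrite lee_fin.
Qed.

Lemma prodr_indic (I : finType) (T : Type) (R : comPzRingType) (A : I -> set T) (t : T) :
  \prod_i \1_(A i) t = \1_(\bigcap_(i in [set: I]) A i) t :> R.
Proof.
have [tA|/existsNP[i tAi]] := pselect (forall i, A i t).
  by rewrite big1 => [|i _]; rewrite indicE mem_set // => i _; exact: tA.
rewrite (bigD1 i) //= indicE memNset // mul0r indicE memNset // => tA.
by apply/tAi/tA.
Qed.

Section independent_integral.
Context d (T : measurableType d) (R : realType) (P : probability T R).
Variables (m : nat) (W : 'I_m -> T -> R).
Hypotheses (mW : forall i, measurable_fun setT (W i))
  (indW : mutually_independent P W).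

Lemma independent_integral_prod_indic (B : 'I_m -> set R) :
  (forall i, measurable (B i)) ->
  (\int[P]_t (\prod_i \1_(B i) (W i t))%:E =
   \prod_i \int[P]_t (\1_(B i) (W i t))%:E)%E.
Proof.
move=> mB; have mWB i : measurable (W i @^-1` B i).
  by rewrite -[_ @^-1` _]setTI; exact: mW.
under [RHS]eq_bigr => i _ do rewrite integral_indic_comp //.
rewrite -indW // -[X in P X]setIT -integral_indic //; last first.
  by apply: fin_bigcap_measurable => //; exact: finite_finset.
by apply: eq_integral => t _; rewrite -prodr_indic.
Qed.

Lemma independent_integral_prod_extend (i0 : 'I_m) (f : 'I_m -> R -> R) (h : R -> R) :
  (forall i, measurable_fun setT (f i)) -> (forall i y, 0 <= f i y) ->
  (forall i, (\int[P]_t (f i (W i t))%:E)%E \is a fin_num) ->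
  measurable_fun setT h -> (forall y, 0 <= h y) ->
  (forall B, measurable B ->
    let g i := if i == i0 then \1_B else f i in
    \int[P]_t (\prod_i g i (W i t))%:E = \prod_i \int[P]_t (g i (W i t))%:E)%E ->
  let g i := if i == i0 then h else f i in
  (\int[P]_t (\prod_i g i (W i t))%:E = \prod_i \int[P]_t (g i (W i t))%:E)%E.
Proof.
move=> mf f0 f_fin mh h0 factor_indic /=.
pose G t := \prod_(i | i != i0) f i (W i t).
pose c := (\prod_(i | i != i0) \int[P]_t (f i (W i t))%:E)%E.
have split_at_i0 (k : R -> R) :
    let g i := if i == i0 then k else f i in
    (\int[P]_t (\prod_i g i (W i t))%:E = \int[P]_t (G t * k (W i0 t))%:E /\
     \prod_i \int[P]_t (g i (W i t))%:E = c * \int[P]_t (k (W i0 t))%:E)%E.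
  rewrite /= (bigD1 i0) //= eqxx muleC; split; last first.
    by congr (_ * _)%E; apply: eq_bigr => i /negbTE ->.
  apply: eq_integral => t _; rewrite (bigD1 i0) //= eqxx mulrC; congr (_ * _)%:E.
  by apply: eq_bigr => i /negbTE ->.
have [-> ->] := split_at_i0 h.
apply: weighted_integral_comp => //.
- rewrite /G; under eq_fun do rewrite big_mkcond /=.
  by apply: measurable_prod => i _; case: (i != i0) => //; exact: measurableT_comp.
- by move=> t; apply: prodr_ge0.
- exact: prode_fin_num.
- by move=> B mB; have [<- <-] := split_at_i0 \1_B; exact: factor_indic.
Qed.

Lemma independent_integral_prod (f : 'I_m -> R -> R) :
  (forall i, measurable_fun setT (f i)) -> (forall i y, 0 <= f i y) ->
  (forall i, (\int[P]_t (f i (W i t))%:E)%E \is a fin_num) ->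
  (\int[P]_t (\prod_i f i (W i t))%:E = \prod_i \int[P]_t (f i (W i t))%:E)%E.
Proof.
suff factor_from k : (k <= m)%N -> forall f : 'I_m -> R -> R,
    (forall i, measurable_fun setT (f i)) -> (forall i y, 0 <= f i y) ->
    (forall i, (\int[P]_t (f i (W i t))%:E)%E \is a fin_num) ->
    (forall i : 'I_m, (k <= i)%N -> exists2 B, measurable B & f i = \1_B) ->
    (\int[P]_t (\prod_i f i (W i t))%:E = \prod_i \int[P]_t (f i (W i t))%:E)%E.
  by move=> mf f0 f_fin; apply: (factor_from m) => // i; rewrite leqNgt ltn_ord.
move=> {f}; elim: k => [_|k IH km] f mf f0 f_fin f_indic.
  have /choice[B fB] : forall i, exists B, measurable B /\ f i = \1_B.
    by move=> i; have [B mB ->] := f_indic i (leq0n _); exists B.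
  have -> : f = fun i => \1_(B i) by apply/funext => i; case: (fB i).
  by apply: independent_integral_prod_indic => i; case: (fB i).
pose i0 : 'I_m := Ordinal km.
have -> : f = fun i => if i == i0 then f i0 else f i.
  by apply/funext => i; case: eqP => [->|].
apply: independent_integral_prod_extend => // B mB.
apply: (IH (ltnW km)) => [i|i y|i|i ki]; case: eqP => [_|ni0] //.
- by rewrite integral_indic_comp ?fin_num_measure //; rewrite -[_ @^-1` _]setTI; exact: mW.
- by exists B.
- apply: f_indic; rewrite ltn_neqAle ki andbT; apply/eqP => ki0.
  by apply/ni0/val_inj; rewrite /= ki0.
Qed.

End independent_integral.

Lemma pois_affine_binomial {R : realType} (a u v : R) {x M : nat} : (x < M)%N ->
  pois (a * u + v) x = (x`!%:R)^-1 *
    \sum_(j < M | (j <= x)%N)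
      ('C(x, j)%:R * a ^+ j) * (u ^+ j * expR (- a * u)) * (v ^+ (x - j) * expR (- v)).
Proof.
move=> xM; rewrite /pois addrC exprDn.
rewrite (big_ord_widen M (fun j => v ^+ (x - j) * (a * u) ^+ j *+ 'C(x, j)) xM) /=.
rewrite !mulr_suml mulr_sumr; apply: eq_bigr => j _.
rewrite opprD expRD mulNr -mulr_natr exprMn; ring.
Qed.

Lemma prod_pois_affine_binomial (R : realType) (n : nat) (alpha : 'I_n -> R)
    (u : R) (v : 'I_n -> R) (x : 'I_n -> nat) :
  \prod_(i < n) pois (alpha i * u + v i) (x i) =
  (\prod_(i < n) ((x i)`!)%:R)^-1 *
  \sum_(j : {ffun 'I_n -> 'I_(\max_(i < n) x i).+1} | [forall i, (j i <= x i)%N])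
     ((\prod_(i < n) ('C(x i, j i)%:R * alpha i ^+ j i)) *
      (u ^+ (\sum_(i < n) (j i : nat)) * expR (- (\sum_(i < n) alpha i) * u)) *
      \prod_(k < n) (v k ^+ (x k - j k) * expR (- v k))).
Proof.
have x_lt i : (x i < (\max_(k < n) x k).+1)%N by rewrite ltnS; exact: leq_bigmax.
under eq_bigr => i _ do rewrite (pois_affine_binomial (alpha i) u (v i) (x_lt i)).
rewrite big_split /= prodfV bigA_distr_big_dep /=; congr (_ * _).
apply: eq_big => [j|j _]; first by apply/familyP/forallP => jx i; have := jx i.
rewrite !big_split /= prodrXr -expR_sum; congr (_ * (_ * expR _) * _).
by rewrite mulNr mulr_suml -sumrN; apply: eq_bigr => i _; rewrite mulNr.
Qed.

Lemma exprn_mul_expRN_le {R : realType} (c y : R) (m : nat) : 0 < c -> 0 <= y ->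
  y ^+ m * expR (- c * y) <= m`!%:R / c ^+ m.
Proof.
move=> c0 y0; have cy0 : 0 <= c * y by rewrite mulr_ge0 // ltW.
have taylor : (c * y) ^+ m / m`!%:R <= expR (c * y).
  case: m => [|m]; last by apply: le_trans (expR_ge1Dxn _ cy0); lra.
  by rewrite expr0 fact0 divr1; apply: le_trans (expR_ge1Dx _); lra.
have fact_gt0 : 0 < m`!%:R :> R by rewrite ltr0n fact_gt0.
rewrite ler_pdivrMr // exprMn in taylor.
rewrite ler_pdivlMr ?exprn_gt0 // mulNr expRN mulrAC ler_pdivrMr ?expR_gt0 //.
by rewrite mulrC [_ * expR _]mulrC.
Qed.

(* On [0, +oo) this is [y ^+ s * expR (- A * y)]; the absolute value makes it
   nonnegative on all of [R]. *)
Definition powexp {R : realType} (A : R) (s : nat) (y : R) : R :=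
  `|y| ^+ s * expR (- A * `|y|).

Lemma measurable_powexp {R : realType} (A : R) (s : nat) :
  measurable_fun setT (powexp A s).
Proof.
apply: measurable_funM; first exact: measurable_funX.
by apply: measurableT_comp => //; exact: measurable_funM.
Qed.

Lemma powexp_ge0 {R : realType} (A : R) (s : nat) (y : R) : 0 <= powexp A s y.
Proof. by rewrite mulr_ge0 ?expR_ge0. Qed.

Lemma integral_bounded_fin_num {d} {T : measurableType d} {R : realType}
    (mu : {finite_measure set T -> \bar R}) {F : T -> R} {M : R} :
  measurable_fun setT F -> (forall t, 0 <= F t) -> (forall t, F t <= M) ->
  (\int[mu]_t (F t)%:E)%E \is a fin_num.
Proof.
move=> mF F0 FM; rewrite ge0_fin_numE; last by apply: integral_ge0 => t _; rewrite lee_fin.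
apply: (@le_lt_trans _ _ (\int[mu]_t (cst M%:E t))%E).
  apply: ge0_le_integral => //.
  - by move=> t _; rewrite lee_fin.
  - exact/measurable_EFinP.
  - by move=> t _; rewrite lee_fin.
by rewrite integral_cst // ltey_eq fin_numM ?fin_num_measure.
Qed.

Lemma integral_powexp_fin_num {d} {T : measurableType d} {R : realType}
    (mu : {finite_measure set T -> \bar R}) {W : T -> R} {A : R} {s : nat} :
  measurable_fun setT W -> 0 <= A -> ((0 < s)%N -> 0 < A) ->
  (\int[mu]_t (powexp A s (W t))%:E)%E \is a fin_num.
Proof.
move=> mW A0 A_gt0.
apply: (integral_bounded_fin_num mu (M := if s is 0 then 1 else s`!%:R / A ^+ s)).
- exact: measurableT_comp (measurable_powexp _ _) mW.
- by move=> t; exact: powexp_ge0.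
case: s A_gt0 => [_ t|s /(_ isT) A_gt0 t].
  by rewrite /powexp expr0 mul1r expR_le1 mulNr oppr_le0 mulr_ge0.
exact: exprn_mul_expRN_le.
Qed.

Section independent_UV.
Context d (T : measurableType d) (R : realType) (P : probability T R).
Variables (n : nat) (U : T -> R) (V : 'I_n -> T -> R).
Hypotheses (mU : measurable_fun setT U) (mV : forall i, measurable_fun setT (V i))
  (indUV : mutually_independent P (UV U V)).

Lemma independent_integral_UV {g : R -> R} {h : 'I_n -> R -> R} :
  measurable_fun setT g -> (forall y, 0 <= g y) ->
  (\int[P]_t (g (U t))%:E)%E \is a fin_num ->
  (forall k, measurable_fun setT (h k)) -> (forall k y, 0 <= h k y) ->
  (forall k, (\int[P]_t (h k (V k t))%:E)%E \is a fin_num) ->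
  (\int[P]_t (g (U t) * \prod_k h k (V k t))%:E =
   \int[P]_t (g (U t))%:E * \prod_k \int[P]_t (h k (V k t))%:E)%E.
Proof.
move=> mg g0 g_fin mh h0 h_fin.
pose f (i : 'I_n.+1) : R -> R := if unlift ord0 i is Some k then h k else g.
have mUV i : measurable_fun setT (UV U V i) by rewrite /UV; case: (unlift ord0 i).
have := @independent_integral_prod _ _ _ P _ _ mUV indUV f.
rewrite big_ord_recl /f /UV unlift_none; under eq_bigr do rewrite liftK.
under eq_integral do rewrite big_ord_recl /= unlift_none.
under eq_integral do under eq_bigr do rewrite liftK.
by apply=> i; case: (unlift ord0 i).
Qed.

Definition UV_term (c A : R) (s : nat) (e : 'I_n -> nat) (t : T) : R :=
  c * (U t ^+ s * expR (- A * U t)) * \prod_(k < n) (V k t ^+ e k * expR (- V k t)).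

Lemma measurable_UV_term c A s e : measurable_fun setT (UV_term c A s e).
Proof.
apply: measurable_funM; first apply: measurable_funM => //.
  apply: measurable_funM; first exact: measurable_funX.
  by apply: measurableT_comp => //; exact: measurable_funM.
apply: measurable_prod => k _; apply: measurable_funM; first exact: measurable_funX.
by apply: measurableT_comp => //; exact: measurableT_comp.
Qed.

Hypotheses (U0 : forall t, 0 <= U t) (V0 : forall i t, 0 <= V i t).

Lemma UV_term_ge0 c A s e t : 0 <= c -> 0 <= UV_term c A s e t.
Proof.
move=> c0; rewrite /UV_term !mulr_ge0 ?exprn_ge0 ?expR_ge0 ?prodr_ge0 // => k _.
by rewrite mulr_ge0 ?exprn_ge0 ?expR_ge0.
Qed.

(* The last hypothesis makes the expectations finite unless the term vanishes. *)
Lemma expectation_UV_term (c A : R) (s : nat) (e : 'I_n -> nat) :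
  0 <= c -> 0 <= A -> ((0 < s)%N -> c != 0 -> 0 < A) ->
  (\int[P]_t (UV_term c A s e t)%:E =
   c%:E * 'E_P[fun t => (U t ^+ s * expR (- A * U t))%R] *
   \prod_(k < n) 'E_P[fun t => (V k t ^+ e k * expR (- V k t))%R])%E.
Proof.
move=> c0 A0 A_gt0; have [->|c_neq0] := eqVneq c 0.
  by under eq_integral do rewrite /UV_term !mul0r; rewrite integral0 !mul0e.
have gU t : powexp A s (U t) = U t ^+ s * expR (- A * U t).
  by rewrite /powexp ger0_norm.
have hV k t : powexp 1 (e k) (V k t) = V k t ^+ e k * expR (- V k t).
  by rewrite /powexp mulN1r ger0_norm.
have U_fin := integral_powexp_fin_num P mU A0 (fun s_gt0 => A_gt0 s_gt0 c_neq0).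
have V_fin k := integral_powexp_fin_num P (mV k) ler01 (fun=> @ltr01 R) (s := e k).
under eq_integral do rewrite /UV_term -mulrA EFinM -gU.
under eq_integral do under eq_bigr do rewrite -hV.
rewrite ge0_integralZl //; last 2 first.
- apply/measurable_EFinP; apply: measurable_funM.
    exact: measurableT_comp (measurable_powexp _ _) mU.
  by apply: measurable_prod => k _; exact: measurableT_comp (measurable_powexp _ _) (mV k).
- by move=> t _; rewrite lee_fin mulr_ge0 ?prodr_ge0 // => *; exact: powexp_ge0.
rewrite -muleA expectation.unlock (independent_integral_UV (measurable_powexp _ _)
  (powexp_ge0 _ _) U_fin (fun k => measurable_powexp _ _) (fun k => powexp_ge0 _ _) V_fin).
congr (_ * (_ * _))%E; first by apply: eq_integral => t _; rewrite gU.
by apply: eq_bigr => k _; apply: eq_integral => t _; rewrite hV.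
Qed.

End independent_UV.

Lemma sum_gt0_of_prod_binom_exprn_neq0 {R : numDomainType} (n : nat) (alpha : 'I_n -> R)
    (x j : 'I_n -> nat) :
  (forall i, 0 <= alpha i) -> (0 < \sum_i j i)%N ->
  \prod_i ('C(x i, j i)%:R * alpha i ^+ j i) != 0 -> 0 < \sum_i alpha i.
Proof.
move=> alpha0; rewrite lt0n sum_nat_eq0 negb_forall => /existsP[i /= ji].
move=> /prodf_neq0 /(_ i isT); rewrite mulf_eq0 negb_or expf_eq0 lt0n ji /= => /andP[_ ai].
rewrite (bigD1 i) //= ltr_pwDl ?sumr_ge0 // lt_def ai.
exact: alpha0.
Qed.

Theorem proposition4 (d : measure_display) (T : measurableType d) (R : realType)
  (P : probability T R) (n : nat) (alpha : 'I_n -> R)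
  (U : T -> R) (V : 'I_n -> T -> R) (fU : R -> R) (fV : 'I_n -> R -> R)
  (X : 'I_n -> T -> nat) :
  (forall i, 0 <= alpha i) ->
  measurable_fun setT U -> (forall i, measurable_fun setT (V i)) ->
  (forall t, 0 <= U t) -> (forall i t, 0 <= V i t) ->
  mutually_independent P (UV U V) ->
  has_density P U fU -> (forall i, has_density P (V i) (fV i)) ->
  (forall i, measurable_fun setT (X i)) ->
  cond_indep_poisson P (generated_events (UV U V))
    (fun i t => alpha i * U t + V i t) X ->
  forall x : 'I_n -> nat,
    P [set t | forall i, X i t = x i] =
    (((\prod_(i < n) ((x i)`!)%:R)^-1)%:E *
     \sum_(j : {ffun 'I_n -> 'I_(\max_(i < n) x i).+1} | [forall i, (j i <= x i)%N])
       ((\prod_(i < n) ('C(x i, j i)%:R * alpha i ^+ j i))%:E *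
        'E_P[fun t => (U t ^+ (\sum_(i < n) (j i : nat))%N * expR (- (\sum_(i < n) alpha i) * U t))%R] *
        \prod_(k < n) 'E_P[fun t => (V k t ^+ (x k - j k) * expR (- V k t))%R]))%E.
Proof.
move=> alpha0 mU mV U0 V0 indUV _ _ _ condX x.
have UV_setT : generated_events (UV U V) setT.
  by apply: sub_sigma_algebra; exists ord0, setT.
rewrite -[X in P X]setTI condX //=.
under eq_integral do rewrite prod_pois_affine_binomial.
have coef_ge0 j : 0 <= \prod_(i < n) ('C(x i, j i)%:R * alpha i ^+ j i).
  by apply: prodr_ge0 => i _; rewrite mulr_ge0 ?exprn_ge0.
rewrite ge0_integralZl_sum ?invr_ge0 ?prodr_ge0 //; last 2 first.
- by move=> j; apply: measurable_UV_term.
- by move=> j t; apply: UV_term_ge0.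
congr (_ * _)%E; apply: eq_bigr => j _.
apply: expectation_UV_term => //; first exact: sumr_ge0.
exact: sum_gt0_of_prod_binom_exprn_neq0.
Qed.
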